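(* For any input word $w\neq\sharp$, the LinMaxMatch tokenization procedure returns exactly the MaxMatch result $M(w)$: it calls MatchLoop$(w\sqcup,0)$ on the (non-augmented) trie, obtaining (tokens, $u$, $i$); if $i<|w|$ or $u\notin\{r,r_\sharp\}$ it returns $[\mathrm{UNK}]$, otherwise it returns tokens, and this output equals $M(w)$.
   Context: Setting: WordPiece tokenization with vocabulary $V$, suffix indicator string $\sharp$ (e.g. ''##''), unknown token $[\mathrm{UNK}]$; $\sqcup$ is a whitespace character not in the vocabulary alphabet. A trie is built from $V$ with root $r$ and node $r_\sharp$ for $\sharp$; $\delta(u,c)$ is the child of $u$ along edge $c$, or null; $\chi_v$ is the string of node $v$. $p_w$: longest non-empty prefix of $w$ in $V\setminus\{\varepsilon,\sharp\}$ (length not counting a leading $\sharp$; must start with $\sharp$ if $w$ does), $\varepsilon$ if none; $q_w:=\sharp w''$ where $w=p_w w''$. MaxMatch: $M(w)=[\,]$ if $w\in\{\varepsilon,\sharp\}$; else $[\mathrm{UNK}]$ if $p_w=\varepsilon$ or $M(q_w)=[\mathrm{UNK}]$; else $[p_w]+M(q_w)$. Failure link $f(v)$ and failure pops $F(v)$ of a node $v$ (with $w=\chi_v$): if $p_w=\varepsilon$ then $f(v)=\mathrm{null}$, $F(v)=[\,]$; otherwise $F(v)$ is the shortest non-empty list of successive longest-matching-prefix tokens popped from the start of $w$ until the remaining suffix (prefixed with $\sharp$) is represented by a trie node, and $f(v)$ is that node (null if impossible). MatchLoop$(s,i)$: set $u=r$, tokens $=[\,]$; while $i<|s|$: while $\delta(u,s[i])=\mathrm{null}$: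 if $f(u)=\mathrm{null}$ return (tokens,$u$,$i$); append $F(u)$ to tokens; $u\leftarrow f(u)$. Then $u\leftarrow\delta(u,s[i])$, $i\leftarrow i+1$. Finally return (tokens,$u$,$i$). *)

From mathcomp Require Import all_boot.
Set Implicit Arguments. Unset Strict Implicit. Unset Printing Implicit Defensive.

Inductive token (A : Type) := Tok of seq A | UNK.
Arguments UNK {A}.

Section WordPiece.
Variables (A : eqType) (sharp : seq A) (V : seq (seq A)).

Definition pcand (w x : seq A) : bool :=
  [&& x \in V, x != [::], x != sharp & (prefix sharp w ==> prefix sharp x)].

(* p_w : the longest candidate prefix of w, or eps if none *)
Definition pw (w : seq A) : seq A :=
  head [::] [seq take n w | n <- rev (iota 1 (size w)) & pcand w (take n w)].

Definition qw (w : seq A) : seq A := sharp ++ drop (size (pw w)) w.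

(* MaxMatch, with fuel; fuel (size w).+1 always suffices since each
   recursive call strictly decreases |w| (not counting a leading sharp). *)
Fixpoint MaxMatch_fuel (n : nat) (w : seq A) : seq (token A) :=
  match n with
  | 0 => [:: UNK]
  | n'.+1 =>
    if (w == [::]) || (w == sharp) then [::]
    else if pw w == [::] then [:: UNK]
    else match MaxMatch_fuel n' (qw w) with
         | [:: UNK] => [:: UNK]
         | l => Tok (pw w) :: l
         end
  end.

Definition MaxMatch (w : seq A) : seq (token A) := MaxMatch_fuel (size w).+1 w.

(* a string is a trie node iff it is a prefix of sharp or of some vocabulary token;
   root r = [::], r_sharp = sharp *)
Definition is_node (x : seq A) : bool := has (prefix x) (sharp :: V).

Definition delta (u : seq A) (c : A) : option (seq A) :=
  if is_node (rcons u c) then Some (rcons u c) else None.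

(* failure pops / failure link: successive MaxMatch pops w -> q_w -> q_{q_w} ...
   until the remaining string is a trie node; None = null link. *)
Fixpoint fail_fuel (n : nat) (w : seq A) : option (seq (token A) * seq A) :=
  match n with
  | 0 => None
  | n'.+1 =>
    if pw w == [::] then None
    else if is_node (qw w) then Some ([:: Tok (pw w)], qw w)
    else match fail_fuel n' (qw w) with
         | Some (l, x) => Some (Tok (pw w) :: l, x)
         | None => None
         end
  end.

(* (F(v), f(v)) if f(v) <> null, None if f(v) = null *)
Definition failure (v : seq A) : option (seq (token A) * seq A) :=
  fail_fuel (size v).+1 v.

(* inner while loop: follow failure links until delta(u,c) <> null
   (result flag true) or f(u) = null (flag false). Fuel (size u).+1 suffices. *)
Fixpoint follow (n : nat) (u : seq A) (c : A) : seq (token A) * seq A * bool :=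
  match n with
  | 0 => ([::], u, false)
  | n'.+1 =>
    if delta u c is Some _ then ([::], u, true)
    else match failure u with
         | None => ([::], u, false)
         | Some (F, v) =>
           let: (t, u', b) := follow n' v c in (F ++ t, u', b)
         end
  end.

Fixpoint loop (s : seq A) (u : seq A) (i : nat) (toks : seq (token A))
  : seq (token A) * seq A * nat :=
  match s with
  | [::] => (toks, u, i)
  | c :: s' =>
    let: (t, u', b) := follow (size u).+1 u c in
    if b then loop s' (rcons u' c) i.+1 (toks ++ t)
    else (toks ++ t, u', i)
  end.

Definition MatchLoop (s : seq A) (i : nat) : seq (token A) * seq A * nat :=
  loop (drop i s) [::] i [::].

Definition LinMaxMatch (ws : A) (w : seq A) : seq (token A) :=
  let: (toks, u, i) := MatchLoop (rcons w ws) 0 in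
  if (i < size w) || ~~ ((u == [::]) || (u == sharp)) then [:: UNK] else toks.

End WordPiece.

(* After reading a prefix [p] of the input, LinMaxMatch sits at a trie node [u] with
   output [toks] such that M(p z) = toks ++ M(u z) for every continuation [z] (with [UNK]
   absorbing).  A failure transition from [u] is a run of MaxMatch pops through strings
   from which the next character [c] is not an edge; then no vocabulary token can reach
   into [c z], so the same pops are valid on [u c z] and the invariant survives the
   transition.  If the loop gets stuck, the pops end at a string without candidate prefix,
   and MaxMatch fails on the whole input too.  The final whitespace lies in no token, so
   the loop ends by exhausting the failure links from [u], and then M(u) is empty exactly
   when [u] is the root or the node of [sharp]. *)

From Pilot Require Import Defs.
From mathcomp Require Import all_boot zify.
Set Implicit Arguments. Unset Strict Implicit. Unset Printing Implicit Defensive.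

Lemma prefix_shorter (T : eqType) (a b y : seq T) :
  prefix a y -> prefix b y -> size a <= size b -> prefix a b.
Proof.
rewrite !prefixE => /eqP ya /eqP yb le_ab.
by rewrite -yb take_takel // ya.
Qed.

Section WordPieceTheory.
Variables (A : eqType) (sharp : seq A) (V : seq (seq A)).
Local Notation pcand := (pcand sharp V).
Local Notation pw := (pw sharp V).
Local Notation qw := (qw sharp V).
Local Notation is_node := (is_node sharp V).
Local Notation failure := (failure sharp V).
Local Notation follow := (follow sharp V).

Lemma is_node_nil : is_node [::].
Proof. by rewrite /Defs.is_node /= prefix0s. Qed.

Lemma is_node_sharp : is_node sharp.
Proof. by rewrite /Defs.is_node /= prefix_refl. Qed.

Lemma is_node_prefix x y : prefix x y -> is_node y -> is_node x.
Proof.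
move=> xy /hasP[v v_in yv]; apply/hasP; exists v => //.
exact: prefix_trans xy yv.
Qed.

Lemma nonnode_nontrivial x : ~~ is_node x -> (x == [::]) || (x == sharp) = false.
Proof.
apply: contraNF => /orP[] /eqP ->; [exact: is_node_nil | exact: is_node_sharp].
Qed.

Definition no_edge c x := ~~ is_node (rcons x c).

Lemma prefix_sharp_cat_no_edge x c z :
  no_edge c x -> prefix sharp (x ++ c :: z) = prefix sharp x.
Proof.
move=> nonnode; apply/idP/idP; last exact: prefix_catl.
have rxc_w : prefix (rcons x c) (x ++ c :: z) by rewrite -cat_rcons prefix_prefix.
move=> sharp_w; case: (leqP (size sharp) (size x)) => [le_sx | lt_xs].
  by apply: prefix_shorter sharp_w _ le_sx; apply: prefix_prefix.
case/negP: nonnode; rewrite /Defs.is_node /= (prefix_shorter rxc_w sharp_w) //.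
by rewrite size_rcons.
Qed.

Lemma pw_spec x : pw x != [::] ->
  exists2 n, 0 < n <= size x & pw x = take n x /\ pcand x (take n x).
Proof.
rewrite /Defs.pw.
case E: [seq n <- rev (iota 1 (size x)) | Defs.pcand sharp V x (take n x)]
  => [|n ns] //= _.
have : n \in [seq n <- rev (iota 1 (size x)) | Defs.pcand sharp V x (take n x)].
  by rewrite E mem_head.
by rewrite mem_filter mem_rev mem_iota add1n ltnS => /andP[cand_n n_range]; exists n.
Qed.

Lemma size_pw x : size (pw x) <= size x.
Proof.
have [->//|/pw_spec[n _ [-> _]]] := eqVneq (pw x) [::].
by rewrite size_take_min geq_minr.
Qed.

Lemma pw_sharp : pw sharp = [::].
Proof.
rewrite /Defs.pw (@eq_in_filter _ _ pred0) ?filter_pred0 // => n _ /=.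
rewrite /Defs.pcand prefix_refl /=; apply/negP => /and4P[_ _ + /size_prefix].
by rewrite size_take_min leq_min leqnn andbT => /[swap] /take_oversize ->; rewrite eqxx.
Qed.

Lemma pcand_cat_no_edge x c z n : no_edge c x ->
  pcand (x ++ c :: z) (take n (x ++ c :: z)) = (n <= size x) && pcand x (take n x).
Proof.
move=> nonnode; case: leqP => [le_nx | lt_xn] /=.
  by rewrite takel_cat // /Defs.pcand prefix_sharp_cat_no_edge.
apply/negP => /and4P[tok_V _ _ _]; case/negP: nonnode; apply/hasP.
exists (take n (x ++ c :: z)); first by rewrite inE tok_V orbT.
apply: (@prefix_shorter _ _ _ (x ++ c :: z)); last 2 first.
- exact: prefix_take.
- by rewrite size_rcons size_take_min size_cat /=; lia.
by rewrite -cat_rcons prefix_prefix.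
Qed.

Lemma pw_cat_no_edge x c z : no_edge c x -> pw (x ++ c :: z) = pw x.
Proof.
move=> nonnode; rewrite /Defs.pw size_cat /= iotaD rev_cat filter_cat map_cat.
rewrite (@eq_in_filter _ _ pred0 (rev (iota (1 + size x) _))); last first.
  move=> n; rewrite mem_rev mem_iota => /andP[lt_xn _].
  by rewrite pcand_cat_no_edge // leqNgt -add1n lt_xn.
rewrite filter_pred0 /=.
rewrite (@eq_in_filter _ _ (fun n => pcand x (take n x))); last first.
  move=> n; rewrite mem_rev mem_iota add1n ltnS => /andP[_ le_nx].
  by rewrite pcand_cat_no_edge // le_nx.
congr head; apply/eq_in_map => n; rewrite mem_filter mem_rev mem_iota add1n ltnS.
by case/and3P => _ _ le_nx; rewrite takel_cat.
Qed.

Lemma qw_cat_no_edge x c z : no_edge c x -> qw (x ++ c :: z) = qw x ++ c :: z.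
Proof.
move=> nonnode; rewrite /Defs.qw pw_cat_no_edge // drop_cat.
case: ltnP => [_|le_xpw]; first by rewrite catA.
have -> : size (pw x) = size x by apply/anti_leq; rewrite le_xpw size_pw.
by rewrite subnn drop0 drop_size cats0.
Qed.

Definition body_size x := if prefix sharp x then size x - size sharp else size x.

Lemma body_size_le x : body_size x <= size x.
Proof. by rewrite /body_size; case: ifP => // _; apply: leq_subr. Qed.

Lemma body_size_qw x : pw x != [::] -> body_size (qw x) < body_size x.
Proof.
case/pw_spec=> n /andP[n_gt0 le_nx] [pw_x /and4P[_ _ neq_sharp sharp_imp]].
rewrite /body_size /Defs.qw pw_x prefix_prefix size_cat size_drop size_takel //.
case: ifP sharp_imp => [sharp_x /= sharp_p | _ _]; last by lia.
have le_sn : size sharp <= n by rewrite -(size_takel le_nx) size_prefix.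
suff : size sharp != n by lia.
apply: contra neq_sharp => /eqP eq_sn.
by move: sharp_p; rewrite prefixE eq_sn take_takel.
Qed.

Lemma MaxMatch_fuel_enough n m x : body_size x < n -> body_size x < m ->
  MaxMatch_fuel sharp V n x = MaxMatch_fuel sharp V m x.
Proof.
elim: n m x => [|n IH] [|m] x //= lt_n lt_m.
case: ifP => // _; case: ifP => // /negbT pw_x.
by rewrite (IH m) // (leq_trans (body_size_qw pw_x)).
Qed.

Definition maxmatch x := MaxMatch_fuel sharp V (body_size x).+1 x.

(* The [[:: UNK]] case of [MaxMatch_fuel]: a failure downstream absorbs everything. *)
Definition tokcat (T l : seq (token A)) :=
  if l is [:: UNK] then [:: UNK] else T ++ l.

Lemma tokcat_nil l : tokcat [::] l = l.
Proof. by case: l => [|[?|] []]. Qed.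

Lemma tokcat_cat T1 T2 l : T2 <> [:: UNK] ->
  tokcat T1 (tokcat T2 l) = tokcat (T1 ++ T2) l.
Proof.
rewrite /tokcat => T2_ok.
by case: l => [|[?|] [|? ?]] //; rewrite ?cats0 -?catA //;
  case: T2 T2_ok => [|[?|] [|? ?]].
Qed.

Lemma maxmatchE x : maxmatch x =
  if (x == [::]) || (x == sharp) then [::]
  else if pw x == [::] then [:: UNK]
  else tokcat [:: Tok (pw x)] (maxmatch (qw x)).
Proof.
rewrite {1}/maxmatch /=; case: ifP => // _; case: ifP => // /negbT pw_x.
rewrite (@MaxMatch_fuel_enough _ (body_size (qw x)).+1) ?body_size_qw //.
by rewrite -/(maxmatch (qw x)); case: (maxmatch (qw x)) => [|[?|] []].
Qed.

Lemma pw_neq_nil_nontrivial x : pw x != [::] -> (x == [::]) || (x == sharp) = false.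
Proof. by apply: contraNF => /orP[] /eqP ->; rewrite ?pw_sharp. Qed.

Inductive pops (P : pred (seq A)) : seq A -> seq (token A) -> seq A -> Prop :=
| pops_nil x : pops P x [::] x
| pops_cons x T y : P x -> pw x != [::] -> pops P (qw x) T y ->
    pops P x (Tok (pw x) :: T) y.

Lemma pops_sub (P Q : pred (seq A)) x T y :
  {subset P <= Q} -> pops P x T y -> pops Q x T y.
Proof.
move=> sPQ; elim=> [x0 | x0 T0 y0 P_x0 pw_x0 _ IH]; first exact: pops_nil.
by apply: pops_cons => //; apply: sPQ.
Qed.

Lemma pops_cat P x T y T' z : pops P x T y -> pops P y T' z -> pops P x (T ++ T') z.
Proof. by elim=> // x0 T0 y0 P_x0 pw_x0 _ IH /IH; apply: pops_cons. Qed.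

Lemma pops_neq_UNK P x T y : pops P x T y -> T <> [:: UNK].
Proof. by case. Qed.

Lemma maxmatch_pops P x T y : pops P x T y -> maxmatch x = tokcat T (maxmatch y).
Proof.
elim=> [x0 | x0 T0 y0 _ pw_x0 chain IH]; first by rewrite tokcat_nil.
rewrite maxmatchE pw_neq_nil_nontrivial // (negbTE pw_x0) IH tokcat_cat //.
exact: pops_neq_UNK chain.
Qed.

(* No vocabulary token reaches into [c :: z], so appending it leaves the pops intact. *)
Lemma pops_cat_no_edge c z x T y : pops (no_edge c) x T y ->
  pops predT (x ++ c :: z) T (y ++ c :: z).
Proof.
elim=> [x0 | x0 T0 y0 nonnode pw_x0 _ IH]; first exact: pops_nil.
rewrite -(pw_cat_no_edge z nonnode); apply: pops_cons => //.
  by rewrite pw_cat_no_edge.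
by rewrite qw_cat_no_edge.
Qed.

(* Failure pops start at the node [x] and pass through non-nodes only. *)
Definition failure_path x : pred (seq A) := fun y => (y == x) || ~~ is_node y.

Lemma failure_path_nonnode x y : ~~ is_node y ->
  {subset failure_path y <= failure_path x}.
Proof.
by move=> nonnode z; rewrite !unfold_in /failure_path => /orP[/eqP -> | ->];
  rewrite ?nonnode orbT.
Qed.

Lemma fail_fuel_some n x F v : body_size x < n ->
  fail_fuel sharp V n x = Some (F, v) ->
  pops (failure_path x) x F v /\ body_size v < body_size x.
Proof.
elim: n x F v => [//|n IH] x F v /=; rewrite ltnS => le_xn.
have x_on_path : failure_path x x by rewrite /failure_path eqxx.
case: ifP => // /negbT pw_x; have lt_qx := body_size_qw pw_x.
case: ifP => [_ [<- <-] | /negbT nonnode_q].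
  by split=> //; apply: pops_cons => //; apply: pops_nil.
case E: (fail_fuel sharp V n (qw x)) => [[F' v']|] // [<- <-].
have [chain lt_vq] := IH _ _ _ (leq_trans lt_qx le_xn) E.
split; last exact: ltn_trans lt_vq lt_qx.
by apply: pops_cons => //; apply: pops_sub chain; apply: failure_path_nonnode.
Qed.

Lemma fail_fuel_none n x : body_size x < n -> fail_fuel sharp V n x = None ->
  exists T y, [/\ pops (failure_path x) x T y, pw y = [::] & failure_path x y].
Proof.
elim: n x => [//|n IH] x /=; rewrite ltnS => le_xn.
have x_on_path : failure_path x x by rewrite /failure_path eqxx.
case: ifP => [/eqP pw_x _ | /negbT pw_x].
  by exists [::], x; split=> //; apply: pops_nil.
case: ifP => // /negbT nonnode_q.
case E: (fail_fuel sharp V n (qw x)) => [[F' v']|] // _.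
have [T [y [chain pw_y y_path]]] := IH _ (leq_trans (body_size_qw pw_x) le_xn) E.
exists (Tok (pw x) :: T), y; split=> //; last exact: failure_path_nonnode y_path.
by apply: pops_cons => //; apply: pops_sub chain; apply: failure_path_nonnode.
Qed.

Lemma failure_some u F v : failure u = Some (F, v) ->
  pops (failure_path u) u F v /\ body_size v < body_size u.
Proof. by apply: fail_fuel_some; rewrite ltnS body_size_le. Qed.

Lemma failure_none u : failure u = None ->
  exists T y, [/\ pops (failure_path u) u T y, pw y = [::] & failure_path u y].
Proof. by apply: fail_fuel_none; rewrite ltnS body_size_le. Qed.

Lemma no_edge_failure_path c u : no_edge c u -> {subset failure_path u <= no_edge c}.
Proof.
move=> nonnode y /orP[/eqP -> // | nonnode_y].
by apply: contra nonnode_y; apply/is_node_prefix/prefix_rcons.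
Qed.

Lemma follow_spec c n u t u' b : body_size u < n -> follow n u c = (t, u', b) ->
  pops (no_edge c) u t u' /\
  (if b then ~~ no_edge c u' : Prop else no_edge c u' /\ failure u' = None).
Proof.
elim: n u t u' b => [//|n IH] u t u' b le_un /=.
rewrite /delta; case: ifP => [node_uc [<- <- <-] | /negbT nonnode_uc].
  by split; [apply: pops_nil | rewrite negbK].
case f_u: (failure u) => [[F v]|]; last by case=> <- <- <-; split=> //; apply: pops_nil.
have [chain_uv lt_vu] := failure_some f_u.
case E: (follow n v c) => [[t0 u0] b0] [<- <- <-].
have [chain_vu0 spec] := IH _ _ _ _ (leq_trans lt_vu le_un) E.
split=> //; apply: pops_cat chain_vu0.
exact: pops_sub (no_edge_failure_path nonnode_uc) chain_uv.
Qed.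

Lemma maxmatch_failure_none u : failure u = None ->
  ~~ ((u == [::]) || (u == sharp)) -> maxmatch u = [:: UNK].
Proof.
case/failure_none=> T [y [chain pw_y y_path]] nontriv_u.
rewrite (maxmatch_pops chain) maxmatchE pw_y eqxx.
case/orP: y_path => [/eqP -> | /nonnode_nontrivial -> //].
by rewrite (negbTE nontriv_u).
Qed.

Lemma maxmatch_stuck c z u : no_edge c u -> failure u = None ->
  maxmatch (u ++ c :: z) = [:: UNK].
Proof.
move=> nonnode_u /failure_none[T [y [chain pw_y y_path]]].
have nonnode_y := no_edge_failure_path nonnode_u y_path.
have chain_z := pops_cat_no_edge z (pops_sub (no_edge_failure_path nonnode_u) chain).
rewrite (maxmatch_pops chain_z) maxmatchE pw_cat_no_edge // pw_y eqxx.
rewrite nonnode_nontrivial //; apply: contra nonnode_y.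
by apply: is_node_prefix; rewrite -cat_rcons prefix_prefix.
Qed.

Definition loop_invariant p u toks :=
  forall z, maxmatch (p ++ z) = tokcat toks (maxmatch (u ++ z)).

Lemma loop_invariant_step c p u toks t u' : loop_invariant p u toks ->
  pops (no_edge c) u t u' -> loop_invariant (rcons p c) (rcons u' c) (toks ++ t).
Proof.
move=> inv chain z; rewrite !cat_rcons inv.
rewrite (maxmatch_pops (pops_cat_no_edge z chain)) tokcat_cat //.
exact: pops_neq_UNK chain.
Qed.

Definition finish (w : seq A) (res : seq (token A) * seq A * nat) :=
  let: (toks, u, i) := res in
  if (i < size w) || ~~ ((u == [::]) || (u == sharp)) then [:: UNK] else toks.

Section Whitespace.
Variable ws : A.
Hypothesis ws_notin_V : forall v, v \in V -> ws \notin v.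
Hypothesis ws_notin_sharp : ws \notin sharp.

Lemma no_edge_ws u : no_edge ws u.
Proof.
apply/negP => /hasP[y y_in /prefixP[s y_eq]].
have ws_y : ws \in y by rewrite y_eq mem_cat mem_rcons mem_head.
move: y_in; rewrite inE => /orP[/eqP y_sharp | /ws_notin_V].
  by move: ws_notin_sharp; rewrite -y_sharp ws_y.
by rewrite ws_y.
Qed.

Lemma finish_loop_whitespace p u toks : loop_invariant p u toks ->
  finish p (loop sharp V [:: ws] u (size p) toks) = maxmatch p.
Proof.
move=> inv; cbn [loop].
case E: (follow (size u).+1 u ws) => [[t u'] b].
have [chain] := follow_spec (n := (size u).+1) (body_size_le u) E.
case: b {E} => [| [_ fail_u']]; first by rewrite no_edge_ws.
have := inv [::]; rewrite !cats0 => ->.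
rewrite (maxmatch_pops chain) tokcat_cat; last exact: pops_neq_UNK chain.
rewrite /finish ltnn /=.
case: ifP => [nontriv | /negbFE triv]; first by rewrite maxmatch_failure_none.
by rewrite maxmatchE triv /tokcat cats0.
Qed.

Lemma finish_loop r p u toks : loop_invariant p u toks ->
  finish (p ++ r) (loop sharp V (rcons r ws) u (size p) toks) = maxmatch (p ++ r).
Proof.
elim: r p u toks => [|c r IH] p u toks inv; first by rewrite cats0 finish_loop_whitespace.
rewrite rcons_cons; cbn [loop].
case E: (follow (size u).+1 u c) => [[t u'] b].
have [chain] := follow_spec (n := (size u).+1) (body_size_le u) E.
case: b {E} => [_ | [nonnode fail_u']].
  by move: (IH _ _ _ (loop_invariant_step inv chain)); rewrite cat_rcons size_rcons.
rewrite /finish size_cat addnS ltnS leq_addr inv.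
by rewrite (maxmatch_pops (pops_cat_no_edge r chain)) maxmatch_stuck.
Qed.

End Whitespace.

End WordPieceTheory.

Theorem mainTheorem5 (A : eqType) (sharp : seq A) (V : seq (seq A)) (ws : A)
  (ws_notin_V : forall v, v \in V -> ws \notin v)
  (ws_notin_sharp : ws \notin sharp)
  (w : seq A) (w_neq_sharp : w <> sharp) :
  LinMaxMatch sharp V ws w = MaxMatch sharp V w.
Proof.
have -> : MaxMatch sharp V w = maxmatch sharp V w.
  by apply: MaxMatch_fuel_enough; rewrite ltnS ?body_size_le.
have inv0 : loop_invariant sharp V [::] [::] [::] by move=> z; rewrite tokcat_nil.
rewrite /LinMaxMatch /MatchLoop drop0.
exact: (finish_loop ws_notin_V ws_notin_sharp w inv0).
Qed.
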